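(* Let $\mathcal{C}_2=\mathbb{C}\{e_1,e_2\}$ be the complex algebra with basis $1,e_1,e_2,e_{12}=e_1e_2$, where $e_1^2=e_2^2=-1$, $e_1e_2=-e_2e_1$. For $A=A_0+A_1e_1+A_2e_2+A_3e_{12}\in\mathcal{C}_2^{m\times n}$ with $A_j\in\mathbb{C}^{m\times n}$, define $$\Phi_2(A)=\begin{pmatrix}A_0+A_1i & -(A_2+A_3i)\\ A_2-A_3i & A_0-A_1i\end{pmatrix}\in\mathbb{C}^{2m\times2n},$$ and $A^{\#}=A_0^*-A_1^*e_1-A_2^*e_2-A_3^*e_{12}$ (with $^*$ the conjugate transpose). Let $A,B\in\mathcal{C}_2^{m\times n}$, $C\in\mathcal{C}_2^{n\times p}$, $\lambda\in\mathbb{C}$. Then: (a) $A=B$ iff $\Phi_2(A)=\Phi_2(B)$; (b) $\Phi_2(A+B)=\Phi_2(A)+\Phi_2(B)$; (c) $\Phi_2(AC)=\Phi_2(A)\Phi_2(C)$, $\Phi_2(\lambda A)=\lambda\Phi_2(A)$, $\Phi_2(I_m)=I_{2m}$; (d) $\Phi_2(A^{\#})=\Phi_2(A)^*$; (e) $A=\frac14\,[(1-ie_1)I_m,\ (e_2+ie_{12})I_m]\,\Phi_2(A)\,[(1-ie_1)I_n,\ (-e_2+ie_{12})I_n]^T$; (f) if $m=n$: $A$ is invertible iff $\Phi_2(A)$ is invertible, in which case $\Phi_2(A^{-1})=\Phi_2(A)^{-1}$; (g) if $m=n$: $p_A(A)=0$, where $p_A(\lambda)=\det[\lambda I_{2m}-\Phi_2(A)]$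 is the characteristic polynomial of $\Phi_2(A)$; (h) for square $A,B\in\mathcal{C}_2^{m\times m}$: there exists an invertible $X\in\mathcal{C}_2^{m\times m}$ with $AX=XB$ iff $\Phi_2(A)$ and $\Phi_2(B)$ are similar over $\mathbb{C}$.
   Context: $i$ is the imaginary unit of $\mathbb{C}$, commuting with all elements of $\mathcal{C}_2$. In (g), the complex polynomial $p_A$ is evaluated at the matrix $A$ over $\mathcal{C}_2$ in the usual way. *)

(* C = R[i] (complex numbers over a real type R; for R the reals this is ℂ). *)
From HB Require Import structures.
From mathcomp Require Import all_boot all_order all_algebra.
From mathcomp Require Import reals.
From mathcomp Require Import complex.
From mathcomp Require Import ring.

Set Implicit Arguments.
Unset Strict Implicit.
Unset Printing Implicit Defensive.

Import Order.TTheory GRing.Theory Num.Theory.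
Local Open Scope ring_scope.

(* The Clifford algebra C_2 = C{e1,e2}: elements a0 + a1 e1 + a2 e2 + a3 e12
   with coefficients in C, e1^2 = e2^2 = -1, e1 e2 = - e2 e1 = e12. *)
Record C2 (R : realType) := MkC2 { c2_0 : R[i]; c2_1 : R[i]; c2_2 : R[i]; c2_3 : R[i] }.

Section C2Ring.
Variable R : realType.
Local Notation C := R[i].
Local Notation C2 := (C2 R).

Definition C2_to (x : C2) : C * C * C * C := (c2_0 x, c2_1 x, c2_2 x, c2_3 x).
Definition C2_of (t : C * C * C * C) : C2 :=
  let: (a, b, c, d) := t in MkC2 a b c d.
Lemma C2_toK : cancel C2_to C2_of. Proof. by case. Qed.

HB.instance Definition _ := Equality.copy C2 (can_type C2_toK).
HB.instance Definition _ := Choice.copy C2 (can_type C2_toK).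

Definition C2zero : C2 := MkC2 0 0 0 0.
Definition C2add (x y : C2) : C2 :=
  MkC2 (c2_0 x + c2_0 y) (c2_1 x + c2_1 y) (c2_2 x + c2_2 y) (c2_3 x + c2_3 y).
Definition C2opp (x : C2) : C2 := MkC2 (- c2_0 x) (- c2_1 x) (- c2_2 x) (- c2_3 x).

Lemma C2addA : associative C2add.
Proof. by case=> ? ? ? ?[? ? ? ?][? ? ? ?]; rewrite /C2add /=; congr MkC2; apply: addrA. Qed.
Lemma C2addC : commutative C2add.
Proof. by case=> ? ? ? ?[? ? ? ?]; rewrite /C2add /=; congr MkC2; apply: addrC. Qed.
Lemma C2add0 : left_id C2zero C2add.
Proof. by case=> ? ? ? ?; rewrite /C2add /=; congr MkC2; apply: add0r. Qed.
Lemma C2addN : left_inverse C2zero C2opp C2add.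
Proof. by case=> ? ? ? ?; rewrite /C2add /=; congr MkC2; apply: addNr. Qed.

HB.instance Definition _ := GRing.isZmodule.Build C2 C2addA C2addC C2add0 C2addN.

Lemma C2addE (x y : C2) : x + y = C2add x y. Proof. by []. Qed.

Definition C2one : C2 := MkC2 1 0 0 0.
(* product following the multiplication table of 1, e1, e2, e12 *)
Definition C2mul (x y : C2) : C2 :=
  let: MkC2 a0 a1 a2 a3 := x in let: MkC2 b0 b1 b2 b3 := y in
  MkC2 (a0 * b0 - a1 * b1 - a2 * b2 - a3 * b3)
       (a0 * b1 + a1 * b0 + a2 * b3 - a3 * b2)
       (a0 * b2 + a2 * b0 - a1 * b3 + a3 * b1)
       (a0 * b3 + a3 * b0 + a1 * b2 - a2 * b1).

Lemma C2mulA : associative C2mul.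
Proof. by case=> ? ? ? ?[? ? ? ?][? ? ? ?]; rewrite /C2mul; congr MkC2; ring. Qed.
Lemma C2mul1 : left_id C2one C2mul.
Proof. by case=> ? ? ? ?; rewrite /C2mul; congr MkC2; ring. Qed.
Lemma C2mulr1 : right_id C2one C2mul.
Proof. by case=> ? ? ? ?; rewrite /C2mul; congr MkC2; ring. Qed.
Lemma C2mulDl : left_distributive C2mul +%R.
Proof. by case=> ? ? ? ?[? ? ? ?][? ? ? ?]; rewrite !C2addE /C2add /C2mul /=; congr MkC2; ring. Qed.
Lemma C2mulDr : right_distributive C2mul +%R.
Proof. by case=> ? ? ? ?[? ? ? ?][? ? ? ?]; rewrite !C2addE /C2add /C2mul /=; congr MkC2; ring. Qed.
Lemma C2one_neq0 : C2one != 0.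
Proof.
apply/eqP=> /(congr1 (@c2_0 R)) /= /eqP; by rewrite oner_eq0.
Qed.

HB.instance Definition _ := GRing.Zmodule_isNzRing.Build C2
  C2mulA C2mul1 C2mulr1 C2mulDl C2mulDr C2one_neq0.

End C2Ring.

Section C2Defs.
Variable R : realType.
Local Notation C := R[i].
Local Notation C2 := (C2 R).

Definition inC2 (l : C) : C2 := MkC2 l 0 0 0.
Definition e1 : C2 := MkC2 0 1 0 0.
Definition e2 : C2 := MkC2 0 0 1 0.
Definition e12 : C2 := MkC2 0 0 0 1.

Definition scaleC2mx {m n} (l : C) (A : 'M[C2]_(m, n)) : 'M[C2]_(m, n) :=
  map_mx (fun x => inC2 l * x) A.

Definition mxC2 {m n} (M : 'M[C]_(m, n)) : 'M[C2]_(m, n) := map_mx inC2 M.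

(* component matrices: A = A0 + A1 e1 + A2 e2 + A3 e12 *)
Definition cmp0 {m n} (A : 'M[C2]_(m, n)) : 'M[C]_(m, n) := map_mx (@c2_0 R) A.
Definition cmp1 {m n} (A : 'M[C2]_(m, n)) : 'M[C]_(m, n) := map_mx (@c2_1 R) A.
Definition cmp2 {m n} (A : 'M[C2]_(m, n)) : 'M[C]_(m, n) := map_mx (@c2_2 R) A.
Definition cmp3 {m n} (A : 'M[C2]_(m, n)) : 'M[C]_(m, n) := map_mx (@c2_3 R) A.

Definition ctrmx {m n} (M : 'M[C]_(m, n)) : 'M[C]_(n, m) := (map_mx (@conjc R) M)^T.

Definition Phi2 {m n} (A : 'M[C2]_(m, n)) : 'M[C]_(m + m, n + n) :=
  block_mx (cmp0 A + 'i *: cmp1 A) (- (cmp2 A + 'i *: cmp3 A))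
           (cmp2 A - 'i *: cmp3 A) (cmp0 A - 'i *: cmp1 A).

Definition sharp {m n} (A : 'M[C2]_(m, n)) : 'M[C2]_(n, m) :=
  \matrix_(i, j) MkC2 (ctrmx (cmp0 A) i j) (- ctrmx (cmp1 A) i j)
                      (- ctrmx (cmp2 A) i j) (- ctrmx (cmp3 A) i j).

Definition C2invertible {n} (A : 'M[C2]_n) : Prop :=
  exists X : 'M[C2]_n, A *m X = 1%:M /\ X *m A = 1%:M.

Definition C2poly_eval {n} (p : {poly C}) (A : 'M[C2]_n) : 'M[C2]_n :=
  \sum_(k < size p) scaleC2mx p`_k (A ^+ k).

End C2Defs.

From HB Require Import structures.
From mathcomp Require Import all_boot all_order all_algebra.
From mathcomp Require Import reals complex ring.

Set Implicit Arguments.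
Unset Strict Implicit.
Unset Printing Implicit Defensive.
Import Order.TTheory GRing.Theory Num.Theory.
Local Open Scope ring_scope.

(* Write A = A0 + A1 e1 + A2 e2 + A3 e12 with complex component matrices.
   Then Phi2 A is an explicit block matrix in A0, ..., A3, and the components
   are recovered from the half sums and half differences of its diagonal and
   of its antidiagonal blocks, so Phi2 is a bijection. The identities (b)-(e)
   are polynomial identities in the components, checked entrywise. Being a
   bijective unital multiplicative map on square matrices, Phi2 carries
   invertibility, inverses, polynomial evaluation and similarity over to
   complex matrices, which gives (f), (h), and (g) by Cayley-Hamilton for
   Phi2 A. *)

Lemma mul_mx_scalar_map (T : pzSemiRingType) m n (M : 'M[T]_(m, n)) a :
  M *m a%:M = map_mx ( *%R^~ a) M.
Proof. by apply/matrixP => i j; rewrite -diag_const_mx mul_mx_diag !mxE. Qed.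

Lemma horner_mx_coef (T : comNzSemiRingType) n (M : 'M[T]_n.+1) (p : {poly T}) :
  horner_mx M p = \sum_(k < size p) p`_k *: M ^+ k.
Proof.
rewrite -{1}[p]coefK poly_def rmorph_sum; apply: eq_bigr => k _.
by rewrite -mul_polyC rmorphM /= rmorphXn /= horner_mx_C horner_mx_X -mulmxE mul_scalar_mx.
Qed.

Section Phi2Theory.
Variable R : realType.
Local Notation C := R[i].
Local Notation C2 := (C2 R).

Lemma natrS_neq0 k : (k.+1%:R : C) != 0. Proof. by rewrite pnatr_eq0. Qed.
Hint Resolve natrS_neq0 : core.

(* Stated for the canonical rmorphism, the form produced by [rmorphM]. *)
Lemma conjc_i : (@conjc R : {rmorphism C -> C}) 'i = - 'i.
Proof. exact: conjCi. Qed.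

Lemma c2_0_is_zmod_morphism : zmod_morphism (@c2_0 R). Proof. by []. Qed.
Lemma c2_1_is_zmod_morphism : zmod_morphism (@c2_1 R). Proof. by []. Qed.
Lemma c2_2_is_zmod_morphism : zmod_morphism (@c2_2 R). Proof. by []. Qed.
Lemma c2_3_is_zmod_morphism : zmod_morphism (@c2_3 R). Proof. by []. Qed.
HB.instance Definition _ := GRing.isZmodMorphism.Build C2 C _ c2_0_is_zmod_morphism.
HB.instance Definition _ := GRing.isZmodMorphism.Build C2 C _ c2_1_is_zmod_morphism.
HB.instance Definition _ := GRing.isZmodMorphism.Build C2 C _ c2_2_is_zmod_morphism.
HB.instance Definition _ := GRing.isZmodMorphism.Build C2 C _ c2_3_is_zmod_morphism.

Lemma C2mulE (x y : C2) : x * y = C2mul x y. Proof. by []. Qed.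

Definition C2mx m n (A0 A1 A2 A3 : 'M[C]_(m, n)) : 'M[C2]_(m, n) :=
  \matrix_(i, j) MkC2 (A0 i j) (A1 i j) (A2 i j) (A3 i j).

Variant C2mx_spec m n : 'M[C2]_(m, n) -> Type :=
  C2mxSpec A0 A1 A2 A3 : C2mx_spec (C2mx A0 A1 A2 A3).

Lemma C2mxP m n (A : 'M[C2]_(m, n)) : C2mx_spec A.
Proof.
have -> : A = C2mx (cmp0 A) (cmp1 A) (cmp2 A) (cmp3 A).
  by apply/matrixP => i j; rewrite !mxE; case: (A i j).
exact: C2mxSpec.
Qed.

Section C2mxAlgebra.
Variables (m n : nat) (A0 A1 A2 A3 : 'M[C]_(m, n)).

Lemma cmp_C2mx : [/\ cmp0 (C2mx A0 A1 A2 A3) = A0, cmp1 (C2mx A0 A1 A2 A3) = A1,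
  cmp2 (C2mx A0 A1 A2 A3) = A2 & cmp3 (C2mx A0 A1 A2 A3) = A3].
Proof. by split; apply/matrixP => i j; rewrite !mxE. Qed.

Lemma Phi2_C2mx : Phi2 (C2mx A0 A1 A2 A3) =
  block_mx (A0 + 'i *: A1) (- (A2 + 'i *: A3)) (A2 - 'i *: A3) (A0 - 'i *: A1).
Proof. by rewrite /Phi2; case: cmp_C2mx => -> -> -> ->. Qed.

Lemma C2mxB B0 B1 B2 B3 : C2mx A0 A1 A2 A3 - C2mx B0 B1 B2 B3 =
  C2mx (A0 - B0) (A1 - B1) (A2 - B2) (A3 - B3).
Proof. by apply/matrixP => i j; rewrite !mxE. Qed.

Lemma scaleC2mx_C2mx l :
  scaleC2mx l (C2mx A0 A1 A2 A3) = C2mx (l *: A0) (l *: A1) (l *: A2) (l *: A3).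
Proof. by apply/matrixP => i j; rewrite !mxE /=; congr MkC2; ring. Qed.

Lemma sharp_C2mx :
  sharp (C2mx A0 A1 A2 A3) = C2mx (ctrmx A0) (- ctrmx A1) (- ctrmx A2) (- ctrmx A3).
Proof.
by rewrite /sharp; case: cmp_C2mx => -> -> -> ->; apply/matrixP => i j; rewrite !mxE.
Qed.

End C2mxAlgebra.

Lemma C2mx1 m : C2mx 1%:M 0 0 0 = 1%:M :> 'M[C2]_m.
Proof. by apply/matrixP => i j; rewrite !mxE; case: (i == j). Qed.

Definition unPhi2 m n (M : 'M[C]_(m + m, n + n)) : 'M[C2]_(m, n) :=
  let a := ulsubmx M in let b := ursubmx M in let c := dlsubmx M in let d := drsubmx M in
  C2mx (2%:R^-1 *: (a + d)) (('i / 2%:R) *: (d - a))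
       (2%:R^-1 *: (c - b)) (('i / 2%:R) *: (c + b)).

Lemma Phi2K m n : cancel (@Phi2 R m n) (@unPhi2 m n).
Proof.
move=> A; case: A / C2mxP => A0 A1 A2 A3.
rewrite /unPhi2 Phi2_C2mx block_mxKul block_mxKur block_mxKdl block_mxKdr.
by congr C2mx; apply/matrixP => i j; rewrite !mxE; field: (mulCii C).
Qed.

Lemma unPhi2K m n : cancel (@unPhi2 m n) (@Phi2 R m n).
Proof.
move=> M; rewrite /unPhi2 Phi2_C2mx -[RHS]submxK.
by congr block_mx; apply/matrixP => i j; rewrite !mxE; field: (mulCii C).
Qed.

Lemma Phi2_inj m n : injective (@Phi2 R m n).
Proof. exact: can_inj (@Phi2K m n). Qed.

Lemma Phi2_is_zmod_morphism m n : zmod_morphism (@Phi2 R m n).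
Proof.
move=> A B; case: A / C2mxP => A0 A1 A2 A3; case: B / C2mxP => B0 B1 B2 B3.
rewrite C2mxB !Phi2_C2mx opp_block_mx add_block_mx.
by congr block_mx; apply/matrixP => i j; rewrite !mxE; ring.
Qed.
HB.instance Definition _ m n :=
  GRing.isZmodMorphism.Build _ _ (@Phi2 R m n) (@Phi2_is_zmod_morphism m n).

Lemma Phi2Z m n (l : C) (A : 'M[C2]_(m, n)) : Phi2 (scaleC2mx l A) = l *: Phi2 A.
Proof.
case: A / C2mxP => A0 A1 A2 A3; rewrite scaleC2mx_C2mx !Phi2_C2mx scale_block_mx.
by congr block_mx; apply/matrixP => i j; rewrite !mxE; ring.
Qed.

Lemma Phi2_1 m : Phi2 (1%:M : 'M[C2]_m) = 1%:M.
Proof. by rewrite -C2mx1 Phi2_C2mx !scaler0 !subr0 !addr0 oppr0 -scalar_mx_block. Qed.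

Lemma Phi2M m n p (A : 'M[C2]_(m, n)) (B : 'M[C2]_(n, p)) :
  Phi2 (A *m B) = Phi2 A *m Phi2 B.
Proof.
case: A / C2mxP => A0 A1 A2 A3; case: B / C2mxP => B0 B1 B2 B3.
rewrite !Phi2_C2mx /Phi2 mulmx_block.
congr block_mx; apply/matrixP => i j;
  rewrite !mxE !raddf_sum mulr_sumr -?sumrN -!big_split -?sumrN;
  by apply: eq_bigr => k _; rewrite !mxE /=; ring: (mulCii C).
Qed.

Lemma Phi2_sharp m n (A : 'M[C2]_(m, n)) : Phi2 (sharp A) = ctrmx (Phi2 A).
Proof.
case: A / C2mxP => A0 A1 A2 A3.
rewrite sharp_C2mx !Phi2_C2mx /ctrmx map_block_mx tr_block_mx.
by congr block_mx; apply/matrixP => i j;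
  rewrite !mxE !(rmorphN, rmorphD, rmorphM) conjc_i; ring.
Qed.

Lemma Phi2_reconstruction m n (A : 'M[C2]_(m, n)) :
  A = scaleC2mx (1 / 4%:R)
        (row_mx ((inC2 1 - inC2 'i * e1 R)%:M) ((e2 R + inC2 'i * e12 R)%:M)
         *m mxC2 (Phi2 A)
         *m (row_mx ((inC2 1 - inC2 'i * e1 R)%:M) ((- e2 R + inC2 'i * e12 R)%:M))^T).
Proof.
case: A / C2mxP => A0 A1 A2 A3.
rewrite Phi2_C2mx /mxC2 map_block_mx mul_row_block tr_row_mx mul_row_col !tr_scalar_mx.
rewrite !mul_scalar_mx !mul_mx_scalar_map; apply/matrixP => i j; rewrite !mxE /=.
by rewrite !C2mulE /=; congr MkC2; field: (mulCii C).
Qed.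

Lemma Phi2X m (A : 'M[C2]_m) k : Phi2 (A ^+ k) = Phi2 A ^+ k.
Proof.
elim: k => [|k IHk]; first by rewrite !expr0 Phi2_1.
by rewrite !exprS -!mulmxE Phi2M IHk.
Qed.

Lemma Phi2_poly_eval m (p : {poly C}) (A : 'M[C2]_m) :
  Phi2 (C2poly_eval p A) = \sum_(k < size p) p`_k *: Phi2 A ^+ k.
Proof. by rewrite raddf_sum; apply: eq_bigr => k _ /=; rewrite Phi2Z Phi2X. Qed.

Lemma C2_Cayley_Hamilton m (A : 'M[C2]_m) : C2poly_eval (char_poly (Phi2 A)) A = 0.
Proof.
apply: Phi2_inj; rewrite Phi2_poly_eval raddf0.
case: m A => [|m] A; first exact: flatmx0.
by rewrite -(@horner_mx_coef _ (m + m.+1)) Cayley_Hamilton.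
Qed.

Lemma Phi2_mulmx1 m (A X : 'M[C2]_m) : A *m X = 1%:M -> Phi2 A *m Phi2 X = 1%:M.
Proof. by move=> AX; rewrite -Phi2M AX Phi2_1. Qed.

Lemma Phi2_invmx m (A X : 'M[C2]_m) : A *m X = 1%:M -> Phi2 X = invmx (Phi2 A).
Proof.
move=> /Phi2_mulmx1 AX; have [uA _] := mulmx1_unit AX.
by rewrite -[LHS](mulKmx uA) AX mulmx1.
Qed.

Lemma C2invertible_Phi2 m (A : 'M[C2]_m) : C2invertible A <-> Phi2 A \in unitmx.
Proof.
split=> [[X [/Phi2_mulmx1 AX _]] | uA]; first exact: (mulmx1_unit AX).1.
exists (unPhi2 (invmx (Phi2 A))).
by split; apply: Phi2_inj; rewrite Phi2M unPhi2K Phi2_1 ?(mulmxV uA) ?(mulVmx uA).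
Qed.

Lemma Phi2_similar m (A B : 'M[C2]_m) :
  (exists X, C2invertible X /\ A *m X = X *m B) <-> similar_in unitmx (Phi2 A) (Phi2 B).
Proof.
split=> [[X [[Y [XY YX]] AX_XB]] | [P uP /eqP]].
  have [uY _] := mulmx1_unit (Phi2_mulmx1 YX).
  exists (Phi2 Y); first exact: uY.
  apply/eqP; rewrite /conjmx (pinvmxE uY) -(Phi2_invmx YX) -!Phi2M.
  by rewrite -mulmxA AX_XB mulmxA YX mul1mx.
rewrite /conjmx (pinvmxE uP) => PAP; exists (unPhi2 (invmx P)); split.
  by apply/C2invertible_Phi2; rewrite unPhi2K unitmx_inv.
by apply: Phi2_inj; rewrite !Phi2M unPhi2K -PAP !mulmxA (mulVmx uP) mul1mx.
Qed.

End Phi2Theory.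

Local Open Scope complex_scope.

Theorem corollary11 (R : realType) :
  (forall (m n p : nat) (A B : 'M[C2 R]_(m, n)) (Cm : 'M[C2 R]_(n, p)) (l : R[i]),
      (* (a) *)
      (A = B <-> Phi2 A = Phi2 B)
      (* (b) *)
   /\ Phi2 (A + B) = Phi2 A + Phi2 B
      (* (c) *)
   /\ Phi2 (A *m Cm) = Phi2 A *m Phi2 Cm
   /\ Phi2 (scaleC2mx l A) = l *: Phi2 A
   /\ Phi2 (1%:M : 'M[C2 R]_m) = 1%:M
      (* (d) *)
   /\ Phi2 (sharp A) = ctrmx (Phi2 A)
      (* (e) *)
   /\ A = scaleC2mx (1 / 4%:R)
            (row_mx ((inC2 1 - inC2 'i * e1 R)%:M) ((e2 R + inC2 'i * e12 R)%:M)
             *m mxC2 (Phi2 A)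
             *m (row_mx ((inC2 1 - inC2 'i * e1 R)%:M)
                        ((- e2 R + inC2 'i * e12 R)%:M))^T))
  /\ (forall (m : nat) (A : 'M[C2 R]_m),
      (* (f) *)
      (C2invertible A <-> Phi2 A \in unitmx)
   /\ (forall X : 'M[C2 R]_m, A *m X = 1%:M -> X *m A = 1%:M ->
         Phi2 X = invmx (Phi2 A))
      (* (g) *)
   /\ C2poly_eval (char_poly (Phi2 A)) A = 0)
  /\ (forall (m : nat) (A B : 'M[C2 R]_m),
      (* (h) *)
      (exists X : 'M[C2 R]_m, C2invertible X /\ A *m X = X *m B)
      <-> similar_in unitmx (Phi2 A) (Phi2 B)).
Proof.
split; [|split].
- move=> m n p A B Cm l; rewrite complexiE.
  split; first by split=> [-> | /Phi2_inj].
  split; first exact: raddfD.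
  split; first exact: Phi2M.
  split; first exact: Phi2Z.
  split; first exact: Phi2_1.
  split; first exact: Phi2_sharp.
  exact: Phi2_reconstruction.
- move=> m A; split; first exact: C2invertible_Phi2.
  split; last exact: C2_Cayley_Hamilton.
  by move=> X AX _; apply: Phi2_invmx.
- exact: Phi2_similar.
Qed.
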